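(* Let $n\ge p$ and $\delta>0$. There exists a constant $K_{n,p,\delta}>0$, depending only on $n,p,\delta$, such that for every $p\times p$ diagonal matrix $D=\mathrm{diag}(d_1,\dots,d_p)$ with positive diagonal entries, $${}_0F_1\!\left(\tfrac{n}{2},\tfrac{D^2}{4}\right)>K_{n,p,\delta}\;\mathrm{etr}\big((1-\delta)D\big).$$
   Context: $\mathcal V_{n,p}=\{X\in\mathbb R^{n\times p}: X^TX=I_p\}$ with normalized Haar probability measure $[dX]$; $\mathrm{etr}(A)=\exp(\mathrm{tr}A)$. For diagonal $D$ with diagonal $\boldsymbol d$, ${}_0F_1\!\left(\tfrac n2,\tfrac{D^2}{4}\right)=\int_{\mathcal V_{n,p}}\exp\big(\sum_{j=1}^p d_jX_{jj}\big)[dX]$ (equivalently $\int\mathrm{etr}(VDM^TX)[dX]$ for any $M\in\mathcal V_{n,p}$, $V\in O(p)$). *)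

From HB Require Import structures.
From mathcomp Require Import all_boot all_order all_algebra.
From mathcomp Require Import all_classical all_reals all_analysis.
Set Implicit Arguments. Unset Strict Implicit. Unset Printing Implicit Defensive.
Import Order.TTheory GRing.Theory Num.Theory.
Import numFieldNormedType.Exports.
Local Open Scope ring_scope.
Local Open Scope classical_set_scope.

Definition stiefel (R : realType) (n p : nat) : set 'M[R]_(n, p) :=
  [set X | X^T *m X = 1%:M].

Definition orthogonal (R : realType) (n : nat) : set 'M[R]_n :=
  [set Q | Q^T *m Q = 1%:M].

(* [is_haar_stiefel P X] : the random matrix X (on the probability space P)
   has the normalized Haar law on V_{n,p}, i.e. X takes values in V_{n,p},
   its entries are measurable, and its law is invariant under left
   multiplication by orthogonal matrices (tested against all bounded
   continuous functions, which determine a Borel probability law on the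
   compact set V_{n,p}).  By uniqueness of the O(n)-invariant probability
   measure on V_{n,p}, this characterizes the Haar measure [dX]. *)
Definition is_haar_stiefel (R : realType) (n p : nat)
    (d : measure_display) (T : measurableType d) (P : probability T R)
    (X : T -> 'M[R]_(n, p)) : Prop :=
  [/\ (forall t, stiefel (X t)),
      (forall i j, measurable_fun setT (fun t => X t i j)) &
      (forall Q : 'M[R]_n, orthogonal Q ->
        forall g : 'M[R]_(n, p) -> R, continuous g ->
          (exists M : R, forall Y, `|g Y| <= M) ->
          (\int[P]_t (g (Q *m X t))%:E = \int[P]_t (g (X t))%:E)%E)].

(* 0F1(n/2, D^2/4) = \int_{V_{n,p}} exp(sum_j d_j X_jj) [dX], D = diag(d) *)
Definition hyp0F1_stiefel (R : realType) (n p : nat) (hnp : (p <= n)%N)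
    (d : measure_display) (T : measurableType d) (P : probability T R)
    (X : T -> 'M[R]_(n, p)) (dv : 'rV[R]_p) : \bar R :=
  (\int[P]_t (expR (\sum_(j < p) dv 0 j * X t (widen_ord hnp j) j))%:E)%E.

From Pilot Require Import Defs.
From HB Require Import structures.
From mathcomp Require Import all_boot all_order all_algebra.
From mathcomp Require Import all_classical all_reals all_analysis.
From mathcomp Require Import finmap ring lra.
Import Order.TTheory GRing.Theory Num.Theory.
Import numFieldNormedType.Exports.
Local Open Scope ring_scope.
Local Open Scope classical_set_scope.

(* Entries of a point of V_{n,p} are at most 1, so sum_j X_jj >= p - delta forces
   every X_jj >= 1 - delta, and there exp(sum_j d_j X_jj) >= etr((1 - delta) D).  It
   therefore suffices to bound from below, uniformly in the law, the mass of this
   neighbourhood of the canonical frame [pid_mx p], through a continuous cut-off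
   [bump].  O(n) acts transitively on V_{n,p} (Householder reflections) and V_{n,p} is
   compact, so finitely many rotations Q_1, ..., Q_N of the region where [bump >= 1/2]
   cover V_{n,p}; integrating sum_k bump(Q_k X) >= 1/2 and using the invariance of the
   law gives N * E[bump X] >= 1/2. *)

Section Stiefel.
Context {R : realType}.

Lemma stiefel_colE {n p} (Y : 'M[R]_(n, p)) a b :
  stiefel Y -> \sum_l Y l a * Y l b = (a == b)%:R.
Proof.
move=> /matrixP /(_ a b); rewrite !mxE => <-.
by apply: eq_bigr => l _; rewrite mxE.
Qed.

Lemma stiefel_entry_le1 {n p} {Y : 'M[R]_(n, p)} :
  stiefel Y -> forall i j, Y i j <= 1.
Proof.
move=> + i j => /(stiefel_colE Y j j); rewrite eqxx (bigD1 i) //= => colj.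
have : 0 <= \sum_(l | l != i) Y l j * Y l j.
  by apply: sumr_ge0 => l _; rewrite -expr2 sqr_ge0.
nra.
Qed.

Lemma stiefel_entry_norm_le1 {n p} {Y : 'M[R]_(n, p)} :
  stiefel Y -> forall i j, `|Y i j| <= 1.
Proof.
move=> SY i j; rewrite ler_norml stiefel_entry_le1 // andbT.
have SNY : stiefel (- Y).
  move: SY; rewrite /stiefel /= => SY.
  by rewrite [(- Y)^T]raddfN mulNmx mulmxN opprK.
by have := stiefel_entry_le1 SNY i j; rewrite mxE; lra.
Qed.

(* Unqualified, [orthogonal] is MathComp's notion for sesquilinear forms. *)
Lemma stiefel_mull {n p} {Q : 'M[R]_n} {Y : 'M[R]_(n, p)} :
  Defs.orthogonal Q -> stiefel Y -> stiefel (Q *m Y).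
Proof.
rewrite /Defs.orthogonal /stiefel /= => QQ YY.
by rewrite trmx_mul mulmxA -(mulmxA Y^T) QQ mulmx1.
Qed.

(* For [w = 0] the coefficient is [2 / 0 = 0], so [householder 0 = 1]. *)
Definition householder {n} (w : 'cV[R]_n) : 'M[R]_n :=
  1%:M - (2 / (w^T *m w) 0 0) *: (w *m w^T).

Lemma householder_mulmx {n} (w : 'cV[R]_n) m (Z : 'M[R]_(n, m)) i j :
  (householder w *m Z) i j = Z i j - 2 / (w^T *m w) 0 0 * w i 0 * (w^T *m Z) 0 j.
Proof.
rewrite mulmxBl mul1mx -scalemxAl -mulmxA !mxE big_ord1 mxE; ring.
Qed.

Lemma householder_orthogonal {n} (w : 'cV[R]_n) :
  Defs.orthogonal (householder w).
Proof.
have HT : (householder w)^T = householder w.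
  by rewrite /householder linearB /= linearZ /= trmx_mul trmxK tr_scalar_mx.
rewrite /Defs.orthogonal /= HT /householder.
set c := (w^T *m w) 0 0; set a := 2 / c; set P := w *m w^T.
have PP : P *m P = c *: P.
  by rewrite /P mulmxA -(mulmxA w) [w^T *m w]mx11_scalar mul_mx_scalar scalemxAl.
have aE : a * a * c = a + a.
  by rewrite /a; have [->|c0] := eqVneq c 0; [rewrite invr0 !mulr0 addr0 | field].
rewrite mulmxBl mul1mx mulmxBr mulmx1 -scalemxAl -scalemxAr PP !scalerA aE.
by rewrite scalerDl opprB addrK subrK.
Qed.

Lemma dotmx_self_eq0 {n} (w : 'cV[R]_n) : (w^T *m w) 0 0 = 0 -> w = 0.
Proof.
rewrite mxE => /eqP; rewrite psumr_eq0 => [/allP w0|l _]; last first.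
  by rewrite mxE -expr2 sqr_ge0.
apply/matrixP => i j; rewrite ord1 mxE.
by have /implyP/(_ isT) := w0 i (mem_index_enum _); rewrite mxE mulf_eq0 orbb => /eqP.
Qed.

Lemma householder_step {n p} (hnp : (p <= n)%N) {Z : 'M[R]_(n, p)} {k : 'I_p} :
  stiefel Z -> (forall i (j : 'I_p), (j < k)%N -> Z i j = (i == j :> nat)%:R) ->
  forall i (j : 'I_p), (j <= k)%N ->
    (householder (col k Z - delta_mx (widen_ord hnp k) 0) *m Z) i j = (i == j :> nat)%:R.
Proof.
move=> SZ Zk i j; set kk := widen_ord hnp k; set w := col k Z - delta_mx kk 0.
have wZ : w^T *m Z = row k 1%:M - row kk Z.
  by rewrite /w linearB /= mulmxBl tr_col -row_mul SZ trmx_delta -rowE.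
have wZE l : (w^T *m Z) 0 l = (k == l)%:R - Z kk l by rewrite wZ !mxE.
have ww : (w^T *m w) 0 0 = 2 * (1 - Z kk k).
  have -> : w^T *m w = col k (w^T *m Z) - col kk w^T.
    by rewrite {2}/w mulmxBr !colE mulmxA.
  by rewrite mxE [(col k _) 0 0]mxE wZE eqxx !mxE /w !eqxx /=; ring.
rewrite householder_mulmx leq_eqVlt => /orP [/eqP /val_inj jk | jk]; last first.
  have kj : (k == j) = false by apply/eqP => kjE; move: jk; rewrite kjE ltnn.
  have kkj : Z kk j = 0 by rewrite Zk //= gtn_eqF.
  by rewrite wZE kj kkj subrr mulr0 subr0 Zk.
rewrite jk wZE eqxx ww; have [Zkk1 | Zkk1] := eqVneq (1 - Z kk k) 0.
  have w0 : w = 0 by apply: dotmx_self_eq0; rewrite ww Zkk1 mulr0.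
  have /matrixP/(_ i 0) := w0; rewrite /w !mxE eqxx andbT.
  by move/eqP; rewrite subr_eq0 => /eqP ->; rewrite Zkk1 mulr0 subr0.
have -> : 2 / (2 * (1 - Z kk k)) * w i 0 * (true%:R - Z kk k) = w i 0.
  by rewrite /=; field.
by rewrite /w !mxE eqxx andbT opprB addrC subrK.
Qed.

Lemma stiefel_transitive {n p} (hnp : (p <= n)%N) {Y : 'M[R]_(n, p)} :
  stiefel Y -> exists2 Q, Defs.orthogonal Q & Q *m Y = pid_mx p.
Proof.
move=> SY.
have : forall m, (m <= p)%N -> exists2 Q, Defs.orthogonal Q &
    forall i (j : 'I_p), (j < m)%N -> (Q *m Y) i j = (i == j :> nat)%:R.
  elim=> [|m IH] lemp.
    by exists 1%:M; rewrite /Defs.orthogonal /= ?trmx1 ?mul1mx.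
  have [Q QO QY] := IH (ltnW lemp).
  pose k := Ordinal lemp.
  exists (householder (col k (Q *m Y) - delta_mx (widen_ord hnp k) 0) *m Q).
    exact: stiefel_mull (householder_orthogonal _) QO.
  by move=> i j jk; rewrite -mulmxA (householder_step hnp (stiefel_mull QO SY)).
case/(_ p (leqnn p)) => Q QO QY; exists Q => //.
apply/matrixP => i j; rewrite QY // mxE.
by case: eqP => //= ->; rewrite ltn_ord.
Qed.

Lemma continuous_sum (T : topologicalType) (I : Type) (s : seq I)
    (F : I -> T -> R) :
  (forall i, continuous (F i)) -> continuous (fun x => \sum_(i <- s) F i x).
Proof. by move=> Fc; apply: continuous_big => //; exact: add_continuous. Qed.

Lemma norm_entry_le_mx_norm {m n} (M : 'M[R]_(m, n)) i j : `|M i j| <= `|M|.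
Proof.
rewrite [leRHS]/Num.Def.normr /= mx_normrE.
by apply/bigmax_geP; right; exists (i, j).
Qed.

Lemma mx_norm_le_entry {m n} (M : 'M[R]_(m, n)) (c : R) :
  0 <= c -> (forall i j, `|M i j| <= c) -> `|M| <= c.
Proof.
move=> c0 Mc; rewrite [leLHS]/Num.Def.normr /= mx_normrE.
by apply/bigmax_leP; split => // -[i j] _; exact: Mc.
Qed.

Lemma continuous_vec_mx {m n} : continuous (@vec_mx R m n).
Proof.
move=> v; apply/(@cvgrPdist_lt _ _ _ (nbhs v) (nbhs_filter v)) => e e0.
apply: filterS (@cvgr_dist_lt _ _ _ (nbhs v) _ id v cvg_id e e0) => w vw.
rewrite -linearB /=; apply: le_lt_trans vw.
apply: mx_norm_le_entry => // i j; rewrite mxE.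
exact: norm_entry_le_mx_norm.
Qed.

Lemma continuous_gram_entry {n p} (a b : 'I_p) :
  continuous (fun Y : 'M[R]_(n, p) => (Y^T *m Y) a b).
Proof.
have -> : (fun Y : 'M[R]_(n, p) => (Y^T *m Y) a b) =
    (fun Y => \sum_(l <- index_enum 'I_n) Y l a * Y l b).
  by apply/funext => Y; rewrite mxE; apply: eq_bigr => l _; rewrite mxE.
by apply: continuous_sum => l Y; apply: continuousM; exact: coord_continuous.
Qed.

Lemma closed_stiefel n p : closed (@stiefel R n p).
Proof.
have -> : @stiefel R n p = \bigcap_(ab in [set: 'I_p * 'I_p])
    ((fun Y => (Y^T *m Y) ab.1 ab.2) @^-1` [set x | x = (1%:M : 'M[R]_p) ab.1 ab.2]).
  apply/seteqP; split => Y; rewrite /stiefel /=; first by move=> YY ab _ /=; rewrite YY.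
  by move=> YY; apply/matrixP => a b; exact: (YY (a, b)).
apply: closed_bigI => -[a b] _.
apply: preimage_closed; last exact: closed_eq.
by move=> Y _; exact: continuous_gram_entry.
Qed.

Lemma compact_stiefel n p : compact (@stiefel R n p).
Proof.
have -> : @stiefel R n p = vec_mx @` (vec_mx @^-1` @stiefel R n p).
  apply/seteqP; split => [Y SY|_ [v Sv <-] //].
  by exists (mxvec Y); rewrite /= mxvecK.
apply: continuous_compact; first exact: continuous_subspaceT continuous_vec_mx.
apply: bounded_closed_compact.
  exists 1; split => [|M M1 v Sv]; first exact: num_real.
  apply: mx_norm_le_entry => [|i k]; first lra.
  rewrite ord1; case/mxvec_indexP: k => a b.
  by have := stiefel_entry_norm_le1 Sv a b; rewrite mxE; lra.
apply: preimage_closed; last exact: closed_stiefel.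
by move=> v _; exact: continuous_vec_mx.
Qed.

Definition clamp01 (x : R) : R := Num.min 1 (Num.max 0 x).

Lemma clamp01_ge0 x : 0 <= clamp01 x.
Proof. by rewrite le_min ler01 le_max lexx. Qed.

Lemma clamp01_le1 x : clamp01 x <= 1.
Proof. by rewrite ge_min lexx. Qed.

Lemma clamp01_gt0 x : 0 < clamp01 x -> 0 < x.
Proof. by rewrite lt_min ltr01 lt_max ltxx. Qed.

Lemma clamp01_ge c x : c <= 1 -> c <= x -> c <= clamp01 x.
Proof. by move=> c1 cx; rewrite le_min c1 le_max cx orbT. Qed.

Lemma continuous_clamp01_affine (c e : R) :
  continuous (fun y : R => clamp01 ((y - c) / e)).
Proof.
move=> y; apply: (@continuous_comp _ _ _ (fun y => (y - c) / e) clamp01).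
  by apply: cvgM; [apply: cvgB; [exact: cvg_id | exact: cvg_cst] | exact: cvg_cst].
apply: (@continuous_min R R (cst 1) (fun x => Num.max 0 x)); first exact: cst_continuous.
by apply: (@continuous_max R R (cst 0) id); [exact: cst_continuous | exact: cvg_id].
Qed.

Section Bump.
Context {n p : nat} (hnp : (p <= n)%N).

Definition diag_sum (Y : 'M[R]_(n, p)) : R := \sum_(j < p) Y (widen_ord hnp j) j.

Lemma diag_sum_pid : diag_sum (pid_mx p) = p%:R.
Proof.
rewrite /diag_sum (eq_bigr (fun=> 1)) ?sumr_const ?card_ord // => j _.
by rewrite mxE eqxx /= ltn_ord.
Qed.

Lemma diag_sum_mulmx (Q : 'M[R]_n) (Y : 'M[R]_(n, p)) :
  diag_sum (Q *m Y) = \sum_(j < p) \sum_(l < n) Q (widen_ord hnp j) l * Y l j.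
Proof. by apply: eq_bigr => j _; rewrite mxE. Qed.

Lemma continuous_diag_sum_mull (Q : 'M[R]_n) :
  continuous (fun Y => diag_sum (Q *m Y)).
Proof.
under eq_fun do rewrite diag_sum_mulmx.
apply: continuous_sum => j; apply: continuous_sum => l Y.
by apply: continuousM; [exact: cst_continuous | exact: coord_continuous].
Qed.

Lemma stiefel_diag_ge {e : R} {Y : 'M[R]_(n, p)} : stiefel Y ->
  p%:R - e <= diag_sum Y -> forall j, 1 - e <= Y (widen_ord hnp j) j.
Proof.
move=> SY Ye j.
have : 1 - Y (widen_ord hnp j) j <= \sum_(k < p) (1 - Y (widen_ord hnp k) k).
  rewrite (bigD1 j) //= lerDl; apply: sumr_ge0 => k _.
  by rewrite subr_ge0 (stiefel_entry_le1 SY).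
by rewrite sumrB sumr_const card_ord -/(diag_sum Y); lra.
Qed.

Lemma stiefel_finite_cover {e : R} : 0 < e ->
  exists Qs : {fset 'M[R]_n}, (forall Q, Q \in Qs -> Defs.orthogonal Q) /\
    forall Y, stiefel Y -> exists2 Q, Q \in Qs & p%:R - e < diag_sum (Q *m Y).
Proof.
move=> e0; have := @compact_stiefel n p; rewrite compact_cover.
pose U Q := [set Y : 'M[R]_(n, p) | p%:R - e < diag_sum (Q *m Y)].
move=> /(_ _ (Defs.orthogonal (n:=n)) U) [||Qs QsO QsU].
- move=> Q _; apply: (@open_comp _ _ _ [set x | p%:R - e < x]); last exact: open_gt.
  by move=> Y _; exact: continuous_diag_sum_mull.
- move=> Y SY; have [Q QO QY] := stiefel_transitive hnp SY.
  by exists Q => //; rewrite /U /= QY diag_sum_pid; lra.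
exists Qs; split; first by move=> Q /QsO; rewrite in_setE.
by move=> Y /QsU [Q QQs UQ]; exists Q.
Qed.

Context (de : R).

(* A continuous cut-off, so that the invariance in [is_haar_stiefel] (stated for
   bounded continuous test functions) applies to it. *)
Definition bump (Y : 'M[R]_(n, p)) : R := clamp01 ((diag_sum Y - (p%:R - de)) / de).

Lemma continuous_bump : continuous bump.
Proof.
move=> Y; apply: (@continuous_comp _ _ _ diag_sum
  (fun y => clamp01 ((y - (p%:R - de)) / de))).
  by have := continuous_diag_sum_mull 1%:M Y; under eq_fun do rewrite mul1mx.
exact: continuous_clamp01_affine.
Qed.

Lemma bump_ge0 Y : 0 <= bump Y.
Proof. exact: clamp01_ge0. Qed.

Lemma bump_le1 Y : bump Y <= 1.
Proof. exact: clamp01_le1. Qed.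

Lemma expR_mul_bump_le (Y : 'M[R]_(n, p)) (dv : 'rV[R]_p) : 0 < de -> stiefel Y ->
  (forall j, 0 < dv 0 j) ->
  expR (\sum_(j < p) (1 - de) * dv 0 j) * bump Y <=
  expR (\sum_(j < p) dv 0 j * Y (widen_ord hnp j) j).
Proof.
move=> de0 SY dv0; have [b_le0|b_gt0] := leP (bump Y) 0.
  have -> : bump Y = 0 by apply/le_anti; rewrite b_le0 bump_ge0.
  by rewrite mulr0 ltW ?expR_gt0.
have Ydiag : p%:R - de <= diag_sum Y.
  by move: b_gt0 => /clamp01_gt0; rewrite pmulr_lgt0 ?invr_gt0 // subr_gt0 => /ltW.
apply: le_trans (_ : expR (\sum_(j < p) (1 - de) * dv 0 j) <= _).
  by apply: ler_piMr; [exact/ltW/expR_gt0 | exact: bump_le1].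
rewrite ler_expR; apply: ler_sum => j _.
by have := dv0 j; have := stiefel_diag_ge SY Ydiag j; nra.
Qed.

Lemma bump_cover : 0 < de ->
  exists Qs : {fset 'M[R]_n}, (forall Q, Q \in Qs -> Defs.orthogonal Q) /\
    forall Y, stiefel Y -> 1 / 2 <= \sum_(Q <- Qs) bump (Q *m Y).
Proof.
move=> de0; have [Qs [QsO QsY]] := stiefel_finite_cover (divr_gt0 de0 (ltr0n _ 2)).
exists Qs; split => // Y /QsY [Q QQs QY].
rewrite (bigD1_seq Q) ?fset_uniq //=.
apply: le_trans (_ : bump (Q *m Y) <= _); last first.
  by rewrite lerDl; apply: sumr_ge0 => Q' _; exact: bump_ge0.
by apply: clamp01_ge; [lra | rewrite ler_pdivlMr //; lra].
Qed.

Lemma measurable_bump_mull {d : measure_display} {T : measurableType d}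
    {X : T -> 'M[R]_(n, p)} (Q : 'M[R]_n) :
  (forall i j, measurable_fun setT (fun t => X t i j)) ->
  measurable_fun setT (fun t => bump (Q *m X t)).
Proof.
move=> Xm; have -> : (fun t => bump (Q *m X t)) =
    (fun y => clamp01 ((y - (p%:R - de)) / de)) \o
    (fun t => \sum_(j < p) \sum_(l < n) Q (widen_ord hnp j) l * X t l j).
  by apply/funext => t; rewrite /= /bump diag_sum_mulmx.
apply: measurableT_comp.
  by apply: measurable_realfun.continuous_measurable_fun; exact: continuous_clamp01_affine.
by apply: measurable_sum => j; apply: measurable_sum => l;
  exact: measurable_realfun.measurable_funM.
Qed.

Lemma integral_bump_le_hyp0F1 {d : measure_display} {T : measurableType d}
    {P : probability T R} {X : T -> 'M[R]_(n, p)} {dv : 'rV[R]_p} :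
  0 < de -> (forall t, stiefel (X t)) ->
  (forall i j, measurable_fun setT (fun t => X t i j)) -> (forall j, 0 < dv 0 j) ->
  ((expR (\sum_(j < p) (1 - de) * dv 0 j))%:E * \int[P]_t (bump (X t))%:E
     <= hyp0F1_stiefel hnp P X dv)%E.
Proof.
move=> de0 XS Xm dv0.
have mb : measurable_fun setT (fun t => bump (X t)).
  by have := measurable_bump_mull 1%:M Xm; under eq_fun do rewrite mul1mx.
rewrite -ge0_integralZl //; first last.
- by move=> t _; rewrite lee_fin bump_ge0.
- exact/measurable_realfun.measurable_EFinP.
apply: ge0_le_integral => //.
- by move=> t _; rewrite -EFinM lee_fin mulr_ge0 ?bump_ge0 // ltW // expR_gt0.
- under eq_fun do rewrite -EFinM.
  by apply/measurable_realfun.measurable_EFinP/measurable_realfun.measurable_funM.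
- apply/measurable_realfun.measurable_EFinP/measurableT_comp.
    exact: measurable_realfun.measurable_expR.
  by apply: measurable_sum => j; exact: measurable_realfun.measurable_funM.
- by move=> t _; rewrite -EFinM lee_fin expR_mul_bump_le.
Qed.

Lemma integral_sum_bump {d : measure_display} {T : measurableType d}
    {P : probability T R} {X : T -> 'M[R]_(n, p)} {Qs : seq 'M[R]_n} :
  is_haar_stiefel P X -> (forall Q, Q \in Qs -> Defs.orthogonal Q) ->
  (\int[P]_t (\sum_(Q <- Qs) bump (Q *m X t))%:E =
     \int[P]_t (bump (X t))%:E *+ size Qs)%E.
Proof.
move=> [XS Xm Xinv] QsO.
under eq_integral do rewrite -sumEFin.
rewrite ge0_integral_sum //; first last.
- by move=> Q t _; rewrite lee_fin bump_ge0.
- by move=> Q; exact/measurable_realfun.measurable_EFinP/measurable_bump_mull.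
rewrite (eq_big_seq (fun=> (\int[P]_t (bump (X t))%:E)%E)) => [|Q QQs]; last first.
  apply: Xinv (QsO Q QQs) _ _ _; first exact: continuous_bump.
  by exists 1 => Y; rewrite ger0_norm ?bump_ge0 ?bump_le1.
by rewrite (big_tnth _ _ Qs) sumr_const card_ord.
Qed.

Lemma haar_integral_bump_gt : 0 < de ->
  exists2 c : R, 0 < c & forall (d : measure_display) (T : measurableType d)
    (P : probability T R) (X : T -> 'M[R]_(n, p)),
    is_haar_stiefel P X -> (c%:E < \int[P]_t (bump (X t))%:E)%E.
Proof.
move=> de0; have [Qs [QsO QsY]] := bump_cover de0.
exists (1 / (2 * (size Qs).+1%:R)); first by rewrite divr_gt0 // mulr_gt0 ?ltr0n.
move=> d T P X HX; have [XS Xm _] := HX.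
have half_le : ((1 / 2)%:E <= \int[P]_t (bump (X t))%:E *+ size Qs)%E.
  rewrite -(integral_sum_bump HX QsO).
  apply: le_trans (_ : \int[P]_t (1 / 2 : R)%:E <= _)%E.
    by rewrite integral_cst //= probability_setT mule1.
  apply: ge0_le_integral => //.
  - apply/measurable_realfun.measurable_EFinP/measurable_sum => Q.
    exact: measurable_bump_mull.
  - by move=> t _; rewrite lee_fin; exact: QsY.
have I0 : (0 <= \int[P]_t (bump (X t))%:E)%E.
  by apply: integral_ge0 => t _; rewrite lee_fin bump_ge0.
move: half_le I0; case: (\int[P]_t _)%E => [r| |] //; last by rewrite ltry.
rewrite -EFin_natmul !lee_fin lte_fin -mulr_natr => half r0.
have Qs0 : 0 <= (size Qs)%:R :> R by [].
rewrite ltr_pdivrMr ?mulr_gt0 ?ltr0n // -natr1; nra.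
Qed.

End Bump.

End Stiefel.

Theorem lemma3 (R : realType) (n p : nat) (hnp : (p <= n)%N)
    (delta : R) (hdelta : 0 < delta) :
  exists K : R, 0 < K /\
    forall (d : measure_display) (T : measurableType d) (P : probability T R)
      (X : T -> 'M[R]_(n, p)),
      is_haar_stiefel P X ->
      forall dv : 'rV[R]_p, (forall j, 0 < dv 0 j) ->
        ((K * expR (\tr ((1 - delta) *: diag_mx dv)))%:E
           < hyp0F1_stiefel hnp P X dv)%E.
Proof.
have [K K0 HK] := haar_integral_bump_gt hnp _ hdelta.
exists K; split => // d T P X HX dv dv0; have [XS Xm _] := HX.
have -> : \tr ((1 - delta) *: diag_mx dv) = \sum_(j < p) (1 - delta) * dv 0 j.
  by apply: eq_bigr => j _; rewrite !mxE eqxx mulr1n.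
apply: lt_le_trans (integral_bump_le_hyp0F1 hnp _ hdelta XS Xm dv0).
by rewrite mulrC EFinM lte_pmul2l ?lte_fin ?expR_gt0 ?HK.
Qed.
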